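(* Fix $n\ge 3$, and let $a_0,\dots,a_{n-1}$ be regular closed subsets of $\mathbb{R}^2$ such that for all $0\le i<n$, $a_i\neq\emptyset$ and $\mathrm{int}(a_i\cup a_{[i+1]})$ is connected, and $a_i\cdot a_j=\emptyset$ for all $0\le i<j<n$. Then there exist Jordan arcs $\alpha_0,\dots,\alpha_{n-1}$ and points $p_0,\dots,p_{n-1}$ such that: for all $0\le i<n$, $\alpha_i$ is a Jordan arc from $p_i$ to $p_{[i+1]}$ with $\alpha_i\subseteq\mathrm{int}(a_i\cup a_{[i+1]})$; the concatenation $\alpha_0\cdots\alpha_{n-1}$ is a Jordan curve lying in $\mathrm{int}(a_0\cup\dots\cup a_{n-1})$; and $p_i\in\mathrm{int}(a_i)$ for all $0\le i<n$.
   Context: $[k]$ denotes $k\bmod n$. $a\cdot b$ denotes $\overline{\mathrm{int}(a\cap b)}$ (the product of regular closed sets). A Jordan arc is a continuous injective map from $[0,1]$ to $\mathbb{R}^2$ (or a constant map, a degenerate arc), identified with its image; a Jordan curve is a continuous injective map from the circle to $\mathbb{R}^2$. The concatenation $\alpha_0\cdots\alpha_{n-1}$ being a Jordan curve means each $\alpha_i$ ends where $\alpha_{[i+1]}$ begins and the union of the arcs, traversed in order, is a Jordan curve. *)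

From HB Require Import structures.
From mathcomp Require Import all_boot all_order all_algebra.
From mathcomp Require Import all_classical all_reals all_analysis.
From mathcomp Require Import Rstruct Rstruct_topology.
Set Implicit Arguments. Unset Strict Implicit. Unset Printing Implicit Defensive.
Import Order.TTheory GRing.Theory Num.Theory.
Local Open Scope classical_set_scope.
Local Open Scope ring_scope.

Definition plane := (Rdefinitions.R * Rdefinitions.R)%type.

Definition regular_closed (A : set plane) : Prop := closure (interior A) = A.

(* Product of regular closed sets: a . b = cl(int(a /\ b)). *)
Definition rc_prod (A B : set plane) : set plane := closure (interior (A `&` B)).

(* A Jordan arc: a map [0,1] -> R^2 (given as a function R -> R^2, only its
   restriction to [0,1] matters) that is continuous and injective on [0,1],
   or constant on [0,1] (degenerate arc). *)
Definition jordan_arc (f : Rdefinitions.R -> plane) : Prop :=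
  {within `[0, 1], continuous f} /\
  ({in `[0, 1] &, injective f} \/ (forall t, t \in `[0, 1] -> f t = f 0)).

(* Image of an arc (arcs are identified with their images). *)
Definition arc_img (f : Rdefinitions.R -> plane) : set plane := f @` `[0, 1].

(* A Jordan curve, parametrized by [0,1] with 0 and 1 identified
   (i.e. a continuous injective map from the circle R/Z). *)
Definition jordan_curve (g : Rdefinitions.R -> plane) : Prop :=
  {within `[0, 1], continuous g} /\ g 0 = g 1 /\ {in `[0, 1[ &, injective g}.

(* The concatenation alpha_0 ... alpha_{n-1} is a Jordan curve: each arc ends
   where the next one begins, and there is a Jordan curve g together with a
   subdivision 0 = t_0 <= t_1 <= ... <= t_n = 1 such that g traverses
   alpha_i on [t_i, t_{i+1}] (same image, from its start to its end). *)
Definition concat_jordan_curve (n : nat) (alpha : nat -> Rdefinitions.R -> plane)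
    (C : set plane) : Prop :=
  (forall i, (i < n)%N -> alpha i 1 = alpha ((i.+1) %% n)%N 0) /\
  exists (g : Rdefinitions.R -> plane) (t : nat -> Rdefinitions.R),
    [/\ jordan_curve g, t 0%N = 0, t n = 1,
        C = g @` `[0, 1] &
        forall i, (i < n)%N ->
          [/\ t i <= t i.+1, g @` `[t i, t i.+1] = arc_img (alpha i),
              g (t i) = alpha i 0 & g (t i.+1) = alpha i 1]].

From HB Require Import structures.
From mathcomp Require Import all_boot all_order all_algebra.
From mathcomp Require Import all_classical all_reals all_analysis.
From mathcomp Require Import Rstruct Rstruct_topology.
From mathcomp Require Import zify lra.
Import Order.TTheory GRing.Theory Num.Theory numFieldNormedType.Exports.
Local Open Scope classical_set_scope.
Local Open Scope ring_scope.
Set Implicit Arguments. Unset Strict Implicit. Unset Printing Implicit Defensive.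

(* Choose p_i in int a_i and join p_i to p_(i+1) by a polygonal path inside the
   open connected set int(a_i \cup a_(i+1)).  Among all cyclic families of such
   paths (the junction points only being required to lie in int a_i), take one
   with the fewest segments.  A self-crossing of a path can be cut out, and so
   can a crossing of two consecutive paths away from their junction: since the
   a_i are closed with disjoint interiors, int(a_(i-1) \cup a_i) and
   int(a_i \cup a_(i+1)) meet only inside int a_i, so the junction can be moved
   to the crossing point.  Hence in a minimal family every path is simple,
   consecutive paths meet only at their junction, and non-consecutive paths lie
   in disjoint open sets: their concatenation is a Jordan curve. *)

Section CyclicSuccessor.
Variable n : nat.
Local Notation next i := ((i.+1) %% n)%N.

Lemma next_cases i : (i < n)%N ->
  (next i = i.+1 /\ (i.+1 < n)%N) \/ (next i = 0%N /\ i.+1 = n).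
Proof.
move=> ilt; case: (ltngtP i.+1 n) => h; last by right; rewrite h modnn.
- by left; rewrite modn_small.
- lia.
Qed.

Lemma next_lt i : (i < n)%N -> (next i < n)%N.
Proof. by move=> ilt; rewrite ltn_pmod //; lia. Qed.

Lemma next_inj i j : (i < n)%N -> (j < n)%N -> next i = next j -> i = j.
Proof.
by move=> ilt jlt; case: (next_cases ilt) => -[-> ?];
  case: (next_cases jlt) => -[-> ?]; lia.
Qed.

Lemma next_neq i : (2 <= n)%N -> (i < n)%N -> next i <> i.
Proof. by move=> n2 ilt; case: (next_cases ilt) => -[-> ?]; lia. Qed.

Lemma next_next_neq i : (3 <= n)%N -> (i < n)%N -> next (next i) <> i.
Proof.
move=> n3 ilt; case: (next_cases ilt) => -[-> h]; last by rewrite modn_small; lia.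
by case: (next_cases h) => -[-> ?]; lia.
Qed.

End CyclicSuccessor.

Section OpenSets.
Variable T : topologicalType.

Lemma open_setD_subset_interior (O A B : set T) :
  open O -> closed A -> O `<=` A `|` B -> O `\` A `<=` B°.
Proof.
move=> oO cA OAB.
have oD : open (O `\` A) by rewrite setDE; apply: openI => //; rewrite openC.
rewrite -open_subsetE // => z [Oz nAz].
by case: (OAB z Oz).
Qed.

Lemma open_subsetU_meets_interior (O A B : set T) :
  open O -> O !=set0 -> closed A -> O `<=` A `|` B ->
  O `&` A° !=set0 \/ O `&` B° !=set0.
Proof.
move=> oO [z Oz] cA OAB.
have [[y [Oy nAy]]|OA] := pselect (exists y, O y /\ ~ A y).
  by right; exists y; split => //; exact: (open_setD_subset_interior oO cA OAB).
left; exists z; split => //.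
have : O `<=` A by move=> y Oy; apply: contrapT => nAy; apply: OA; exists y.
by rewrite open_subsetE //; apply.
Qed.

End OpenSets.

Section CyclicRegions.
Variables (T : topologicalType) (n : nat) (a : nat -> set T).
Hypothesis n_ge3 : (3 <= n)%N.
Hypothesis closed_a : forall i, (i < n)%N -> closed (a i).
Hypothesis disjoint_interiors : forall i j, (i < n)%N -> (j < n)%N -> i <> j ->
  (a i)° `&` (a j)° = set0.
Local Notation next i := ((i.+1) %% n)%N.
Local Notation corridor i := (a i `|` a (next i))°.

Let interior_disj i j x : (i < n)%N -> (j < n)%N -> i <> j ->
  (a i)° x -> (a j)° x -> False.
Proof. by move=> ilt jlt ij; move/disjoints_subset: (disjoint_interiors ilt jlt ij); apply. Qed.

Lemma corridorI_next i : (i < n)%N ->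
  corridor i `&` corridor (next i) `<=` (a (next i))°.
Proof.
(* Off a_(i+1) this open set lies both in int a_i and in int a_(i+2). *)
move=> ilt; set j := next i; set k := next j.
have jlt : (j < n)%N by exact: next_lt.
have ki : k <> i by exact: next_next_neq.
have oN : open (corridor i `&` corridor j) by apply: openI; exact: open_interior.
rewrite -open_subsetE // => z Nz; apply: contrapT => nAz.
have [Ni Nj] := (open_setD_subset_interior (B := a i) oN (closed_a jlt),
                 open_setD_subset_interior (B := a k) oN (closed_a jlt)).
apply: (interior_disj (i := k) (j := i) (x := z) (next_lt jlt) ilt ki).
- by apply: Nj => // y [_ /interior_subset].
- by apply: Ni => // y [/interior_subset [] ? _]; [right|left].
Qed.

Lemma corridorI_nonadjacent i j : (i < n)%N -> (j < n)%N -> i <> j ->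
  j <> next i -> i <> next j -> corridor i `&` corridor j = set0.
Proof.
move=> ilt jlt ij jni inj; apply/seteqP; split => // x Nx; exfalso.
have [i'lt j'lt] := (next_lt ilt, next_lt jlt).
have i'j' : next i <> next j by move/(next_inj ilt jlt).
have oN : open (corridor i `&` corridor j) by apply: openI; exact: open_interior.
have NA : corridor j `<=` a j `|` a (next j) by exact: interior_subset.
have no_open_in k O : (k < n)%N -> k <> j -> k <> next j -> open O -> O !=set0 ->
    O `<=` corridor j -> O `<=` (a k)° -> False.
  move=> klt kj kj' oO O0 Oj Ok.
  have [[y [Oy Iy]]|[y [Oy Iy]]] := open_subsetU_meets_interior oO O0
    (closed_a jlt) (subset_trans Oj NA).
    exact: (interior_disj klt jlt kj (Ok y Oy) Iy).
  exact: (interior_disj klt j'lt kj' (Ok y Oy) Iy).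
(* Otherwise the part of this intersection outside a_i would be a nonempty open
   subset of int a_(i+1) inside corridor j. *)
have Nai : corridor i `&` corridor j `<=` a i.
  move=> y Ny; apply: contrapT => nAy.
  have oO : open ((corridor i `&` corridor j) `\` a i).
    by rewrite setDE; apply: openI => //; rewrite openC; exact: closed_a.
  apply: (no_open_in _ _ i'lt (nesym jni) i'j' oO); first by exists y.
    by move=> w [[]].
  by apply: open_setD_subset_interior (closed_a ilt) _ => // w [/interior_subset].
apply: (no_open_in _ _ ilt ij inj oN); first by exists x.
  by move=> w [].
by rewrite -open_subsetE.
Qed.

End CyclicRegions.

Section Segments.
Variables (R : realFieldType) (V : lmodType R).
Implicit Types (x y z u p w : V) (s t : R).

Definition lerp x y t : V := x + t *: (y - x).

Definition segment x y : set V := [set z | exists2 t, 0 <= t <= 1 & z = lerp x y t].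

Lemma lerp0 x y : lerp x y 0 = x.
Proof. by rewrite /lerp scale0r addr0. Qed.

Lemma lerp1 x y : lerp x y 1 = y.
Proof. by rewrite /lerp scale1r addrC subrK. Qed.

Lemma lerp_inj x y : x <> y -> injective (lerp x y).
Proof.
move=> xy s t /addrI /eqP; rewrite -subr_eq0 -scalerBl scaler_eq0 subr_eq0.
by case/orP => [/eqP //|]; rewrite subr_eq0 => /eqP /esym.
Qed.

Lemma segment_start x y : segment x y x.
Proof. by exists 0; rewrite ?lerp0 // lexx ler01. Qed.

Lemma segment_end x y : segment x y y.
Proof. by exists 1; rewrite ?lerp1 // lexx ler01. Qed.

Lemma segmentC x y : segment x y = segment y x.
Proof.
suff sub u p : segment u p `<=` segment p u by apply/seteqP; split; exact: sub.
move=> _ [t /andP[t0 t1] ->]; exists (1 - t).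
  by rewrite subr_ge0 t1 lerBlDr lerDl.
by rewrite /lerp scalerBl scale1r addrA (addrC p (u - p)) subrK -scalerN opprB.
Qed.

Lemma segment_subl x y z : segment x y z -> segment x z `<=` segment x y.
Proof.
move=> [s /andP[s0 s1] ->] _ [t /andP[t0 t1] ->]; exists (t * s).
  by rewrite mulr_ge0 // mulr_ile1.
by rewrite /lerp (addrC x (s *: _)) addrK scalerA.
Qed.

Lemma segment_subr x y z : segment x y z -> segment z y `<=` segment x y.
Proof. by rewrite !(segmentC _ y); exact: segment_subl. Qed.

Lemma segment_of_scaled p y z s t : 0 < s -> 0 <= t <= s ->
  s *: (y - p) = t *: (z - p) -> segment p z y.
Proof.
move=> s0 /andP[t0 ts] e; exists (t / s).
  by rewrite ler_pdivrMr // mul1r ts andbT divr_ge0 // ltW.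
by rewrite /lerp mulrC -scalerA -e scalerA mulVf ?gt_eqF // scale1r addrC subrK.
Qed.

Lemma segment_backtrack u p w x : segment u p x -> segment p w x -> x <> p ->
  segment u p w \/ segment p w u.
Proof.
move=> [s /andP[s0 s1] ->] [r /andP[r0 r1] exr] xp.
have s1' : 0 < 1 - s.
  rewrite subr_gt0 lt_neqAle s1 andbT; apply/eqP => es; apply: xp.
  by rewrite es lerp1.
have r0' : 0 < r.
  rewrite lt_neqAle r0 andbT; apply/eqP => er; apply: xp.
  by rewrite exr -er lerp0.
have e : r *: (w - p) = (1 - s) *: (u - p).
  apply: (addrI p); rewrite -[p + r *: _]/(lerp p w r) -exr /lerp.
  by rewrite scalerBl scale1r addrA (addrC p (u - p)) subrK -scalerN opprB.
case: (lerP (1 - s) r) => h.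
  by left; rewrite segmentC; apply: (segment_of_scaled r0' _ e); rewrite h ltW.
by right; apply: (segment_of_scaled s1' _ (esym e)); rewrite r0 ltW.
Qed.

Lemma segment_backtrack_subset u p w x : segment u p x -> segment p w x -> x <> p ->
  segment u w `<=` segment u p `|` segment p w.
Proof.
move=> up pw xp; case: (segment_backtrack up pw xp) => [upw|pwu] z.
  by move/(segment_subl upw); left.
by move/(segment_subr pwu); right.
Qed.

End Segments.

Section PolygonalPaths.
Variables (R : realFieldType) (V : lmodType R).
Implicit Types (U : set V) (w : nat -> V) (x y : V).

Definition polygonal U (d : nat) w :=
  forall j, (j < d)%N -> segment (w j) (w j.+1) `<=` U.

Definition polygonal_path U (p q : V) :=
  exists d w, [/\ w 0%N = p, w d = q & polygonal U d w].

Definition simple_polygonal (d : nat) w :=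
  (forall k, (k < d)%N -> w k <> w k.+1) /\
  (forall k l x, (k < l < d)%N -> segment (w k) (w k.+1) x ->
     segment (w l) (w l.+1) x -> l = k.+1 /\ x = w k.+1).

(* The vertices w_0, ..., w_k, x, w_(l+1), ..., w_d. *)
Definition splice w (k l : nat) x : nat -> V :=
  fun j => if (j <= k)%N then w j else if j == k.+1 then x else w (j + l - k.+1)%N.

Definition path_suffix w (l : nat) y : nat -> V :=
  fun j => if j == 0%N then y else w (j + l)%N.

Lemma polygonal_splice U d w k l x : (k <= l <= d)%N -> polygonal U d w ->
  segment (w k) x `<=` U -> ((l < d)%N -> segment x (w l.+1) `<=` U) ->
  [/\ splice w k l x 0%N = w 0%N,
      splice w k l x (k.+1 + (d - l)) = (if (l < d)%N then w d else x) &
      polygonal U (k.+1 + (d - l)) (splice w k l x)].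
Proof.
move=> /andP[kl ld] Pw Hk Hl; rewrite /splice; split => //.
  have -> : (k.+1 + (d - l) <= k)%N = false by lia.
  case: ltnP => hl.
    have -> : (k.+1 + (d - l) == k.+1)%N = false by apply/eqP; lia.
    by have -> : (k.+1 + (d - l) + l - k.+1 = d)%N by lia.
  by have -> : (k.+1 + (d - l) == k.+1)%N by apply/eqP; lia.
move=> j jlt; case: (ltngtP j k) => [jk|kj|->]; last by rewrite ?leqnn ?ltnn ?eqxx.
  by rewrite ?(ltnW jk) ?jk; apply: Pw; lia.
have -> : (j.+1 == k.+1) = false by apply/eqP; lia.
case: (eqVneq j k.+1) => [->|jk1].
  have -> : (k.+2 + l - k.+1 = l.+1)%N by lia.
  by apply: Hl; lia.
have -> : (j.+1 + l - k.+1 = (j + l - k.+1).+1)%N by lia.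
by apply: Pw; lia.
Qed.

Lemma polygonal_suffix U d w l y : (l <= d)%N -> polygonal U d w ->
  ((l < d)%N -> segment y (w l.+1) `<=` U) ->
  [/\ path_suffix w l y 0%N = y,
      (l < d)%N -> path_suffix w l y (d - l) = w d &
      polygonal U (d - l) (path_suffix w l y)].
Proof.
move=> ld Pw Hy; rewrite /path_suffix; split => //.
  move=> hl; have -> : (d - l == 0)%N = false by apply/eqP; lia.
  by rewrite subnK // ltnW.
move=> j jlt; case: (eqVneq j 0%N) => [->|j0] /=; first by rewrite add1n; apply: Hy; lia.
have -> : (j.+1 + l = (j + l).+1)%N by lia.
by apply: Pw; lia.
Qed.

Lemma polygonal_path_snoc U p q z : polygonal_path U p q ->
  segment q z `<=` U -> polygonal_path U p z.
Proof.
move=> [d [w [w0 wd Pw]]] Hz.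
have Hz' : segment (w d) z `<=` U by rewrite wd.
have Hd : (d < d)%N -> segment z (w d.+1) `<=` U by rewrite ltnn.
have ddd : (d <= d <= d)%N by rewrite leqnn.
have [s0 sd Ps] := polygonal_splice ddd Pw Hz' Hd.
by exists (d.+1 + (d - d))%N, (splice w d d z); rewrite s0 sd ltnn.
Qed.

End PolygonalPaths.

Section PolygonalConnectivity.
Variables (R : realFieldType) (V : normedModType R).

Lemma segment_ball (x y : V) (e : R) : ball x e y -> segment x y `<=` ball x e.
Proof.
rewrite pseudo_metric_ball_norm /= => xy _ [t /andP[t0 t1] ->].
rewrite /ball_ /lerp /= opprD addrA subrr add0r normrN normrZ distrC.
by apply: le_lt_trans xy; rewrite ger0_norm // ler_piMl.
Qed.

Lemma open_ball_subset (U : set V) (x : V) : open U -> U x ->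
  exists2 e, 0 < e & ball x e `<=` U.
Proof. by move=> oU Ux; apply/nbhs_ballP; exact: open_nbhs_nbhs. Qed.

Lemma connected_polygonal_path (U : set V) p q : open U -> connected U ->
  U p -> U q -> polygonal_path U p q.
Proof.
move=> oU cU Up Uq.
pose B := [set z | U z /\ polygonal_path U p z].
have oB : open B.
  rewrite openE => z [Uz Pz]; have [e e0 He] := open_ball_subset oU Uz.
  apply/nbhs_ballP; exists e => // y zy; split; first exact: He.
  exact: (polygonal_path_snoc Pz (subset_trans (segment_ball zy) He)).
have oC : open (U `\` B).
  rewrite openE => z [Uz nBz]; have [e e0 He] := open_ball_subset oU Uz.
  apply/nbhs_ballP; exists e => // y zy; split; first exact: He.
  move=> [_ Py]; apply: nBz; split => //; apply: (polygonal_path_snoc Py).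
  by rewrite segmentC; exact: (subset_trans (segment_ball zy) He).
suff UB : B = U by have [] : B q by rewrite UB.
apply: cU.
- exists p; split => //; exists 0%N, (fun=> p); split => // j.
- by exists B => //; apply/seteqP; split => x; [move=> Bx; split => //; case: Bx|case].
- exists (~` (U `\` B)); first by rewrite closedC.
  apply/seteqP; split => x; first by move=> [Ux Px]; split => // -[_]; apply.
  by move=> [Ux nx]; split => //; apply: contrapT => nPx; apply: nx; split => // -[].
Qed.

End PolygonalConnectivity.

Lemma nat_piece (R : realDomainType) (N : nat) (x : R) : (0 < N)%N -> 0 <= x <= N%:R ->
  exists2 k, (k < N)%N & k%:R <= x <= k.+1%:R.
Proof.
elim: N => [//|N IH] _ /andP[x0 xN].
have [xN'|] := lerP x N%:R; last by exists N => //; rewrite xN andbT ltW.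
have [N0|N0] := posnP N; first by exists 0%N => //; rewrite x0 (le_trans xN') // N0 ler01.
have [k kN hk] := IH N0 (introT andP (conj x0 xN')).
by exists k => //; rewrite ltnS ltnW.
Qed.

Section ConcatPath.
Variables (R : realType) (V : normedModType R).
Implicit Types (N k : nat) (F : nat -> R -> V) (s : R).

Definition clamp01 (x : R) : R := Num.min (Num.max x 0) 1.

Lemma clamp01_id (x : R) : 0 <= x <= 1 -> clamp01 x = x.
Proof. by case/andP => x0 x1; rewrite /clamp01 max_l // min_l. Qed.

Lemma clamp01_le0 (x : R) : x <= 0 -> clamp01 x = 0.
Proof. by move=> x0; rewrite /clamp01 max_r // min_l. Qed.

Lemma clamp01_ge1 (x : R) : 1 <= x -> clamp01 x = 1.
Proof. by move=> x1; rewrite /clamp01 max_l ?min_r // (le_trans ler01). Qed.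

Lemma continuous_clamp01 : continuous clamp01.
Proof.
move=> x; apply: (@continuous_min _ _ (fun y : R^o => Num.max y 0) (fun=> 1));
  last exact: cvg_cst.
by apply: (@continuous_max _ _ id (fun=> 0)); [exact: cvg_id|exact: cvg_cst].
Qed.

(* The j-th summand runs along F j while N s runs through [j, j+1]; when the
   pieces are chained the sum telescopes. *)
Definition concat_path N F s : V :=
  F 0%N 0 + \sum_(j < N) (F j (clamp01 (N%:R * s - j%:R)) - F j 0).

Definition chained N F := forall j, (j.+1 < N)%N -> F j 1 = F j.+1 0.

Lemma concat_path0 N F : concat_path N F 0 = F 0%N 0.
Proof.
rewrite /concat_path big1 ?addr0 // => j _.
by rewrite mulr0 sub0r clamp01_le0 ?subrr // oppr_le0.
Qed.

Lemma concat_pathE N F k s : chained N F -> (k < N)%N -> k%:R <= N%:R * s <= k.+1%:R ->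
  concat_path N F s = F k (N%:R * s - k%:R).
Proof.
move=> ch kN /andP[ks sk].
suff partial M : (M <= N)%N -> \sum_(j < M) (F j (clamp01 (N%:R * s - j%:R)) - F j 0) =
    if (M <= k)%N then F M 0 - F 0%N 0 else F k (N%:R * s - k%:R) - F 0%N 0.
  by rewrite /concat_path partial // leqNgt kN /= addrC subrK.
elim: M => [|M IH] MN; first by rewrite big_ord0 subrr.
rewrite big_ord_recr /= IH ?(ltnW MN) //; case: (ltngtP M k) => h.
- have Mk : M.+1%:R <= k%:R :> R by rewrite ler_nat.
  rewrite clamp01_ge1; last by rewrite -natr1 in Mk; lra.
  by rewrite ch 1?addrC ?addrA ?subrK //; lia.
- have kM : k.+1%:R <= M%:R :> R by rewrite ler_nat.
  by rewrite clamp01_le0 ?subrr ?addr0 //; lra.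
- rewrite h clamp01_id; first by rewrite addrC addrA subrK.
  by rewrite -natr1 in sk; apply/andP; split; lra.
Qed.

Lemma concat_path_piece N F s : chained N F -> (0 < N)%N -> 0 <= s <= 1 ->
  exists k, [/\ (k < N)%N, 0 <= N%:R * s - k%:R <= 1 & concat_path N F s = F k (N%:R * s - k%:R)].
Proof.
move=> ch N0 /andP[s0 s1].
have [|k kN hk] := @nat_piece R N (N%:R * s) N0.
  by rewrite mulr_ge0 //= ler_piMr.
exists k; split => //; last exact: concat_pathE.
by move: hk; rewrite -natr1 => /andP[? ?]; apply/andP; split; lra.
Qed.

Lemma concat_path1 N F : chained N F -> (0 < N)%N -> concat_path N F 1 = F N.-1 1.
Proof.
move=> ch N0; rewrite (@concat_pathE _ _ N.-1) ?prednK ?mulr1 //.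
  by rewrite -[X in X%:R - _](prednK N0) -natr1 addrAC subrr add0r.
by rewrite ler_nat leq_pred lexx.
Qed.

Lemma continuous_concat_path N F : (forall j, continuous (F j)) -> continuous (concat_path N F).
Proof.
move=> cF s; apply: cvgD; first exact: cvg_cst.
apply: (continuous_big (op := +%R)); first exact: add_continuous.
move=> j _ t; apply: cvgB; last exact: cvg_cst.
apply: (@continuous_comp R^o R^o V (fun t => clamp01 (N%:R * t - j%:R)) (F j)); last exact: cF.
apply: (@continuous_comp R^o R^o R^o (fun t => N%:R * t - j%:R) clamp01);
  last exact: continuous_clamp01.
by apply: cvgB; [apply: cvgM; [exact: cvg_cst|exact: cvg_id]|exact: cvg_cst].
Qed.

Lemma concat_path_node N F k : chained N F -> (k < N)%N ->
  concat_path N F (k%:R / N%:R) = F k 0 /\ concat_path N F (k.+1%:R / N%:R) = F k 1.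
Proof.
move=> ch kN; have N0 : N%:R != 0 :> R by rewrite pnatr_eq0 -lt0n (leq_ltn_trans _ kN).
have NE (x : R) : N%:R * (x / N%:R) = x by rewrite mulrC divfK.
split; rewrite (concat_pathE ch kN) NE; try by rewrite ?lexx ?andbT ler_nat leqnSn.
  by rewrite subrr.
by rewrite -natr1 addrC addKr.
Qed.

Lemma concat_path_image N F k : chained N F -> (k < N)%N ->
  concat_path N F @` `[k%:R / N%:R, k.+1%:R / N%:R] = F k @` `[0, 1].
Proof.
move=> ch kN; have N0 : 0 < N%:R :> R by rewrite ltr0n; lia.
have NE (x : R) : N%:R * (x / N%:R) = x by rewrite mulrC divfK ?gt_eqF.
have scaleE (t : R) : (k%:R / N%:R <= t <= k.+1%:R / N%:R) = (k%:R <= N%:R * t <= k.+1%:R).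
  by rewrite ler_pdivrMr // ler_pdivlMr // ![t * _]mulrC.
apply/seteqP; split => y [t].
  rewrite /= in_itv /= scaleE => kt <-; rewrite (concat_pathE ch kN kt).
  exists (N%:R * t - k%:R) => //; rewrite /= in_itv /=.
  by move: kt; rewrite -natr1 => /andP[? ?]; apply/andP; split; lra.
rewrite /= in_itv /= => /andP[t0 t1] <-; exists ((k%:R + t) / N%:R).
  by rewrite /= in_itv /= scaleE NE -natr1; apply/andP; split; lra.
have kt : k%:R <= N%:R * ((k%:R + t) / N%:R) <= k.+1%:R.
  by rewrite NE -natr1; apply/andP; split; lra.
by rewrite (concat_pathE ch kN kt) NE addrC addKr.
Qed.

Lemma concat_path_inj_on N F (I : interval R) : chained N F -> (0 < N)%N ->
  {subset I <= `[0, 1]} ->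
  (forall k k' u u', (k < N)%N -> (k' < N)%N -> 0 <= u <= 1 -> 0 <= u' <= 1 ->
     (k%:R + u) / N%:R \in I -> (k'%:R + u') / N%:R \in I ->
     F k u = F k' u' -> k%:R + u = k'%:R + u') ->
  {in I &, injective (concat_path N F)}.
Proof.
move=> ch N0 sI pos s s' Is Is'.
have N0' : N%:R != 0 :> R by rewrite pnatr_eq0 -lt0n.
have in01 t : t \in I -> 0 <= t <= 1 by move/sI; rewrite in_itv.
have [k [kN hu ->]] := concat_path_piece ch N0 (in01 _ Is).
have [k' [k'N hu' ->]] := concat_path_piece ch N0 (in01 _ Is').
have posE t j : j%:R + (N%:R * t - j%:R) = N%:R * t by rewrite addrC subrK.
move/(pos _ _ _ _ kN k'N hu hu'); rewrite !posE ![N%:R * _ / _]mulrC !mulKf //.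
by move=> /(_ Is Is') /(mulfI N0').
Qed.

End ConcatPath.

Section Polyline.
Variables (R : realType) (V : normedModType R).
Implicit Types (d : nat) (w : nat -> V).

Definition polyline d w : R -> V := concat_path d (fun j => lerp (w j) (w j.+1)).

Lemma polyline_chained d w : chained d (fun j => lerp (w j) (w j.+1)).
Proof. by move=> j _; rewrite lerp1 lerp0. Qed.

Lemma continuous_polyline d w : continuous (polyline d w).
Proof.
apply: continuous_concat_path => j t; apply: cvgD; first exact: cvg_cst.
by apply: cvgZ; [exact: cvg_id|exact: cvg_cst].
Qed.

Lemma polyline0 d w : polyline d w 0 = w 0%N.
Proof. by rewrite /polyline concat_path0 lerp0. Qed.

Lemma polyline1 d w : (0 < d)%N -> polyline d w 1 = w d.
Proof. by move=> d0; rewrite /polyline concat_path1 ?lerp1 ?prednK //; exact: polyline_chained. Qed.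

Lemma polyline_segment d w s : (0 < d)%N -> 0 <= s <= 1 ->
  exists2 k, (k < d)%N & segment (w k) (w k.+1) (polyline d w s).
Proof.
move=> d0 s01; have [k [kd hu e]] := concat_path_piece (@polyline_chained d w) d0 s01.
by exists k => //; exists (d%:R * s - k%:R).
Qed.

Lemma polyline_image_subset (U : set V) d w : (0 < d)%N -> polygonal U d w ->
  polyline d w @` `[0, 1] `<=` U.
Proof.
move=> d0 Pw _ [s s01 <-]; move: s01; rewrite /= in_itv /= => s01.
by have [k kd] := polyline_segment w d0 s01; exact: Pw.
Qed.

Lemma polyline_inj d w : (0 < d)%N -> simple_polygonal d w ->
  {in `[0, 1] &, injective (polyline d w)}.
Proof.
move=> d0 [nodeg cross]; apply: concat_path_inj_on (@polyline_chained d w) d0 _ _ => //.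
have pos k k' u u' : (k <= k')%N -> (k' < d)%N -> 0 <= u <= 1 -> 0 <= u' <= 1 ->
    lerp (w k) (w k.+1) u = lerp (w k') (w k'.+1) u' -> k%:R + u = k'%:R + u'.
  move=> kk' k'd u01 u'01 e; have [kE|kltk'] : k = k' \/ (k < k')%N by lia.
    by subst k; rewrite (lerp_inj (nodeg _ k'd) e).
  have seg_k : segment (w k) (w k.+1) (lerp (w k) (w k.+1) u) by exists u.
  have seg_k' : segment (w k') (w k'.+1) (lerp (w k) (w k.+1) u) by rewrite e; exists u'.
  have kk'd : (k < k' < d)%N by rewrite kltk' k'd.
  have [k'E xE] := cross k k' _ kk'd seg_k seg_k'.
  have u1 : u = 1.
    by apply: (lerp_inj (nodeg _ (ltn_trans kltk' k'd))); rewrite xE lerp1.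
  have u'0 : u' = 0 by apply: (lerp_inj (nodeg _ k'd)); rewrite -e xE lerp0 k'E.
  by rewrite u1 u'0 k'E addr0 natr1.
move=> k k' u u' kd k'd u01 u'01 _ _ e; case: (leqP k k') => kk'.
  exact: pos.
exact/esym/(pos _ _ _ _ (ltnW kk') kd u'01 u01 (esym e)).
Qed.

End Polyline.

Lemma sum_update2 n (d : nat -> nat) i j a b : (i < n)%N -> (j < n)%N -> i <> j ->
  (\sum_(k < n) [eta d with i |-> a, j |-> b] k + (d i + d j) =
   \sum_(k < n) d k + (a + b))%N.
Proof.
move=> ilt jlt ij.
have ji : Ordinal jlt != Ordinal ilt by apply/eqP => -[/esym].
rewrite (bigD1 (Ordinal ilt)) //= (bigD1 (Ordinal jlt)) //=.
rewrite [in RHS](bigD1 (Ordinal ilt)) //= [in RHS](bigD1 (Ordinal jlt)) //=.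
rewrite eqxx ifN_eq; last by apply/eqP => /esym.
rewrite eqxx.
set S := (\sum_(k < n | _) _)%N; set S' := (\sum_(k < n | _) _)%N.
suff -> : S = S' by lia.
apply: eq_bigr => k /andP[kj ki] /=.
by rewrite (ifN_eq _ _ ki) (ifN_eq _ _ kj).
Qed.

Section PolygonalCycles.
Variables (R : realFieldType) (V : lmodType R) (n : nat) (U P : nat -> set V).
Hypothesis n_ge3 : (3 <= n)%N.
Local Notation next i := ((i.+1) %% n)%N.
Hypothesis UI_next : forall i, (i < n)%N -> U i `&` U (next i) `<=` P (next i).
Hypothesis PI_next : forall i, (i < n)%N -> P i `&` P (next i) = set0.
Implicit Types (d : nat -> nat) (w : nat -> nat -> V).

Definition polygonal_cycle d w := forall i, (i < n)%N ->
  [/\ P i (w i 0%N), w i (d i) = w (next i) 0%N & polygonal (U i) (d i) (w i)].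

Definition cycle_size d := (\sum_(i < n) d i)%N.

Definition reducible d w :=
  exists d' w', polygonal_cycle d' w' /\ (cycle_size d' < cycle_size d)%N.

Definition simple_cycle d w := forall i, (i < n)%N ->
  simple_polygonal (d i) (w i) /\
  (forall k l x, (k < d i)%N -> (l < d (next i))%N ->
     segment (w i k) (w i k.+1) x -> segment (w (next i) l) (w (next i) l.+1) x ->
     [/\ k.+1 = d i, l = 0%N & x = w i (d i)]).

Let n_ge2 : (2 <= n)%N. Proof. exact: ltnW. Qed.

Let P_disjoint i x : (i < n)%N -> P i x -> P (next i) x -> False.
Proof. by move=> ilt; move/disjoints_subset: (PI_next ilt); apply. Qed.

Lemma cycle_len_gt0 d w i : polygonal_cycle d w -> (i < n)%N -> (0 < d i)%N.
Proof.
move=> C ilt; rewrite lt0n; apply/eqP => d0.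
have [Pi wnext _] := C i ilt; have [Pi' _ _] := C _ (next_lt ilt).
by apply: (P_disjoint ilt Pi); rewrite -d0 wnext.
Qed.

Lemma reducible_replace2 d w i y (d1 d2 : nat) (w1 w2 : nat -> V) :
  polygonal_cycle d w -> (i < n)%N ->
  P (next i) y -> w1 0%N = w i 0%N -> w1 d1 = y -> polygonal (U i) d1 w1 ->
  w2 0%N = y -> w2 d2 = w (next i) (d (next i)) -> polygonal (U (next i)) d2 w2 ->
  (d1 + d2 < d i + d (next i))%N -> reducible d w.
Proof.
move=> C ilt Py w10 w1d Pw1 w20 w2d Pw2 dlt.
have [i'lt i'i] := (next_lt ilt, next_neq n_ge2 ilt).
exists [eta d with i |-> d1, next i |-> d2], [eta w with i |-> w1, next i |-> w2].
split; last by move: (sum_update2 d d1 d2 ilt i'lt (nesym i'i)); rewrite /cycle_size; lia.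
move=> j jlt /=; case: (eqVneq j i) => [->|ji].
  have [Pi _ _] := C i ilt.
  by rewrite w10 w1d (ifN_eq _ _ (introN eqP i'i)) eqxx w20.
case: (eqVneq j (next i)) => [->|ji'].
  rewrite w20 w2d; have [_ -> _] := C _ i'lt.
  by rewrite !ifN_eq //; apply/eqP; [exact: next_neq|exact: next_next_neq].
have [Pj wj Pwj] := C j jlt; split => //; rewrite wj.
case: (eqVneq (next j) i) => [->|_] /=; first by rewrite w10.
by rewrite ifN_eq //; apply: contra_neq ji; exact: (next_inj jlt ilt).
Qed.

Lemma reducible_replace d w i (d1 : nat) (w1 : nat -> V) : polygonal_cycle d w -> (i < n)%N ->
  w1 0%N = w i 0%N -> w1 d1 = w i (d i) -> polygonal (U i) d1 w1 ->
  (d1 < d i)%N -> reducible d w.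
Proof.
move=> C ilt w10 w1d Pw1 dlt; have [_ wi _] := C i ilt.
have [P' _ Pw'] := C _ (next_lt ilt).
by apply: (reducible_replace2 C ilt P' w10 _ Pw1 (erefl _) (erefl _) Pw'); rewrite -?wi //; lia.
Qed.

Lemma reducible_splice d w i k l x : polygonal_cycle d w -> (i < n)%N -> (k.+1 < l <= d i)%N ->
  segment (w i k) x `<=` U i -> ((l < d i)%N -> segment x (w i l.+1) `<=` U i) ->
  (l = d i -> x = w i (d i)) -> reducible d w.
Proof.
move=> C ilt /andP[kl ld] Hk Hl Hx; have [_ _ Pwi] := C i ilt.
have kld : (k <= l <= d i)%N by rewrite ld andbT; lia.
have [s0 sd Ps] := polygonal_splice kld Pwi Hk Hl.
apply: (reducible_replace C ilt s0 _ Ps); last by lia.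
by rewrite sd; case: ltnP => // dl; apply: Hx; apply/eqP; rewrite eqn_leq ld.
Qed.

Lemma reducible_shortcut d w i v : polygonal_cycle d w -> (i < n)%N -> (0 < v < d i)%N ->
  segment (w i v.-1) (w i v.+1) `<=` U i -> reducible d w.
Proof.
move=> C ilt /andP[v0 vd] Hv; have [_ _ Pwi] := C i ilt.
apply: (reducible_splice (k := v.-1) (l := v.+1) (x := w i v.+1) C ilt) => //.
- by rewrite prednK // ltnSn vd.
- exact: Pwi.
- by move=> <-.
Qed.

Lemma reducible_repeated_vertex d w i j : polygonal_cycle d w -> (i < n)%N -> (j < d i)%N ->
  w i j = w i j.+1 -> reducible d w.
Proof.
move=> C ilt jd e; have [Pi wi Pwi] := C i ilt.
have [jd'|dj] := ltnP j.+1 (d i).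
  by apply: (reducible_shortcut (v := j.+1) C ilt); [rewrite jd'|rewrite /= e; exact: Pwi].
have {}dj : d i = j.+1 by apply/eqP; rewrite eqn_leq jd dj.
have [j0|j0] := posnP j.
  have [Pi' _ _] := C _ (next_lt ilt); exfalso; apply: (P_disjoint ilt Pi).
  by have -> : w i 0%N = w (next i) 0%N by rewrite -wi dj -e j0.
apply: (reducible_shortcut (v := j) C ilt); first by rewrite j0 dj ltnSn.
by rewrite -e; have := Pwi j.-1; rewrite prednK //; apply; lia.
Qed.

Lemma reducible_self_crossing d w i k l x : polygonal_cycle d w -> (i < n)%N -> (k < l < d i)%N ->
  segment (w i k) (w i k.+1) x -> segment (w i l) (w i l.+1) x ->
  ~ (l = k.+1 /\ x = w i k.+1) -> reducible d w.
Proof.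
move=> C ilt /andP[kl ld] hk hl nk; have [_ _ Pwi] := C i ilt.
have [kl'|lk] := ltnP k.+1 l.
  apply: (reducible_splice (k := k) (l := l) (x := x) C ilt); first by rewrite ?kl' ltnW.
  - exact: subset_trans (segment_subl hk) (Pwi _ (ltn_trans kl ld)).
  - by move=> _; exact: subset_trans (segment_subr hl) (Pwi _ ld).
  - by move=> le; move: ld; rewrite le ltnn.
have lE : l = k.+1 by apply/eqP; rewrite eqn_leq lk kl.
have xk : x <> w i k.+1 by move=> xE; apply: nk.
rewrite lE in hl ld.
apply: (reducible_shortcut (v := k.+1) C ilt) => //=.
by move=> z /(segment_backtrack_subset hk hl xk) []; apply: Pwi => //; lia.
Qed.

Lemma reducible_move_junction d w i k l y : polygonal_cycle d w -> (i < n)%N ->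
  (k < d i)%N -> (l <= d (next i))%N -> segment (w i k) y `<=` U i ->
  ((l < d (next i))%N -> segment y (w (next i) l.+1) `<=` U (next i)) ->
  (l = d (next i) -> y = w (next i) (d (next i))) ->
  (k.+1 + (d (next i) - l) < d i + d (next i))%N -> reducible d w.
Proof.
move=> C ilt kd ld Hk Hl Hy dlt; have i'lt := next_lt ilt.
have [_ _ Pwi] := C i ilt; have [_ _ Pwi'] := C _ i'lt.
have Uy : U i y by apply: Hk; exact: segment_end.
have U'y : U (next i) y.
  have [hl|hl] := ltnP l (d (next i)); first by apply: (Hl hl); exact: segment_start.
  have d0 := cycle_len_gt0 C i'lt.
  rewrite Hy; last by apply/eqP; rewrite eqn_leq ld.
  by apply: (Pwi' (d (next i)).-1); rewrite ?prednK ?ltn_predL //; exact: segment_end.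
have kd' : (k <= d i <= d i)%N by rewrite leqnn ltnW.
have nd : (d i < d i)%N -> segment y (w i (d i).+1) `<=` U i by rewrite ltnn.
have [s0 sd Ps] := polygonal_splice kd' Pwi Hk nd.
have [t0 td Pt] := polygonal_suffix ld Pwi' Hl.
apply: (reducible_replace2 C ilt (UI_next ilt (conj Uy U'y)) s0 _ Ps t0 _ Pt); last by lia.
  by rewrite sd ltnn.
have [hl|hl] := ltnP l (d (next i)); first exact: td.
have le : l = d (next i) by apply/eqP; rewrite eqn_leq ld.
by rewrite le subnn /path_suffix /= Hy.
Qed.

Lemma reducible_adjacent_crossing d w i k l x : polygonal_cycle d w -> (i < n)%N ->
  (k < d i)%N -> (l < d (next i))%N ->
  segment (w i k) (w i k.+1) x -> segment (w (next i) l) (w (next i) l.+1) x ->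
  ~ [/\ k.+1 = d i, l = 0%N & x = w i (d i)] -> reducible d w.
Proof.
move=> C ilt kd ld hk hl nk; have i'lt := next_lt ilt.
have [Pi wi Pwi] := C i ilt; have [_ _ Pwi'] := C _ i'lt.
case: (boolP ((k.+1 < d i) || (0 < l))%N) => [/orP kl|].
  apply: (reducible_move_junction (k := k) (l := l) (y := x) C ilt kd (ltnW ld)).
  - exact: subset_trans (segment_subl hk) (Pwi _ kd).
  - by move=> _; exact: subset_trans (segment_subr hl) (Pwi' _ ld).
  - by move=> le; move: ld; rewrite le ltnn.
  - lia.
rewrite negb_or -leqNgt lt0n negbK => /andP[kd' /eqP l0]; subst l.
have dk : d i = k.+1 by apply/eqP; rewrite eqn_leq kd kd'.
have xp : x <> w i k.+1 by move=> xE; apply: nk; rewrite dk xE.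
have hl' : segment (w i k.+1) (w (next i) 1%N) x by rewrite -dk wi.
case: (segment_backtrack hk hl' xp) => hb.
  apply: (reducible_move_junction (k := k) (l := 1%N) (y := w (next i) 1%N) C ilt kd ld).
  - exact: subset_trans (segment_subl hb) (Pwi _ kd).
  - by move=> l1; apply: Pwi'.
  - by move=> ->.
  - lia.
have hb' : segment (w (next i) 0%N) (w (next i) 1%N) (w i k) by rewrite -wi dk.
have k0 : (0 < k)%N.
  rewrite lt0n; apply/eqP => k0; subst k; apply: (P_disjoint ilt Pi).
  by apply: UI_next => //; split; [apply: (Pwi 0%N kd); exact: segment_start|exact: Pwi' hb'].
apply: (reducible_move_junction (k := k.-1) (l := 0%N) (y := w i k) C ilt _ (leq0n _)).
- by rewrite prednK // ltnW.
- by have := Pwi k.-1; rewrite prednK //; apply; lia.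
- by move=> _; exact: subset_trans (segment_subr hb') (Pwi' _ ld).
- by move=> d0; move: ld; rewrite -d0.
- lia.
Qed.

Lemma simple_or_reducible d w : polygonal_cycle d w -> simple_cycle d w \/ reducible d w.
Proof.
move=> C; have [red|irred] := pselect (reducible d w); [by right|left].
move=> i ilt; split; first split.
- by move=> k kd e; apply: irred; exact: (reducible_repeated_vertex C ilt kd e).
- move=> k l x kld hk hl; apply: contrapT => nk; apply: irred.
  exact: (reducible_self_crossing C ilt kld hk hl nk).
- move=> k l x kd ld hk hl; apply: contrapT => nk; apply: irred.
  exact: (reducible_adjacent_crossing C ilt kd ld hk hl nk).
Qed.

Lemma exists_simple_cycle d w : polygonal_cycle d w ->
  exists d' w', polygonal_cycle d' w' /\ simple_cycle d' w'.
Proof.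
suff bounded m d' w' : (cycle_size d' <= m)%N -> polygonal_cycle d' w' ->
    exists d'' w'', polygonal_cycle d'' w'' /\ simple_cycle d'' w''.
  by move=> C; exact: (bounded _ d w (leqnn _) C).
elim: m d' w' => [|m IH] d' w' dm C';
  have [S|[d'' [w'' [C'' lt]]]] := simple_or_reducible C'; try by exists d', w'.
  by move: dm lt; lia.
by apply: (IH d'' w'') => //; lia.
Qed.

End PolygonalCycles.

Section ClosedCurve.
Variables (R : realType) (V : normedModType R) (n : nat) (U P : nat -> set V).
Hypothesis n_ge3 : (3 <= n)%N.
Local Notation next i := ((i.+1) %% n)%N.
Hypothesis PI_next : forall i, (i < n)%N -> P i `&` P (next i) = set0.
Hypothesis UI_nonadjacent : forall i j, (i < n)%N -> (j < n)%N -> i <> j ->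
  j <> next i -> i <> next j -> U i `&` U j = set0.
Variables (d : nat -> nat) (w : nat -> nat -> V).
Hypothesis C : polygonal_cycle n U P d w.
Hypothesis S : simple_cycle n d w.

Definition arcs i := polyline (d i) (w i).

Let d_gt0 i : (i < n)%N -> (0 < d i)%N.
Proof. by move=> ilt; have := cycle_len_gt0 PI_next C ilt. Qed.

Lemma arcs0 i : arcs i 0 = w i 0%N.
Proof. exact: polyline0. Qed.

Lemma arcs1 i : (i < n)%N -> arcs i 1 = w (next i) 0%N.
Proof.
move=> ilt; have [_ <- _] := C ilt.
by rewrite /arcs polyline1 ?d_gt0.
Qed.

Lemma arcs_chained : chained n arcs.
Proof.
move=> j jn; rewrite arcs1 ?arcs0 ?modn_small //; lia.
Qed.

Lemma arcs_inj i : (i < n)%N -> {in `[0, 1] &, injective (arcs i)}.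
Proof. by move=> ilt; apply: polyline_inj; [exact: d_gt0 ilt|case: (S ilt)]. Qed.

Lemma arcs_image i : (i < n)%N -> arcs i @` `[0, 1] `<=` U i.
Proof.
move=> ilt; have [_ _ Pwi] := C ilt.
by apply: polyline_image_subset Pwi; exact: d_gt0 ilt.
Qed.

Let arcs_segment i u : (i < n)%N -> 0 <= u <= 1 ->
  exists2 k, (k < d i)%N & segment (w i k) (w i k.+1) (arcs i u).
Proof. by move=> ilt; apply: polyline_segment; exact: d_gt0 ilt. Qed.

Let in01 (u : R) : 0 <= u <= 1 -> u \in `[0, 1].
Proof. by rewrite in_itv. Qed.

Lemma arcs_meet_next i u u' : (i < n)%N -> 0 <= u <= 1 -> 0 <= u' <= 1 ->
  arcs i u = arcs (next i) u' -> u = 1 /\ u' = 0.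
Proof.
move=> ilt u01 u'01 e; have i'lt := next_lt ilt.
have [k kd hk] := arcs_segment ilt u01.
have [l ld hl] := arcs_segment i'lt u'01.
rewrite -e in hl; have [_ _ xE] := (S ilt).2 _ _ _ kd ld hk hl.
have [_ wi _] := C ilt.
have I0 : (0 : R) \in `[0, 1] by rewrite in_itv /= lexx ler01.
have I1 : (1 : R) \in `[0, 1] by rewrite in_itv /= lexx ler01.
split; first by apply: (arcs_inj ilt (in01 u01) I1); rewrite xE /arcs polyline1 ?d_gt0.
by apply: (arcs_inj i'lt (in01 u'01) I0); rewrite -e xE wi arcs0.
Qed.

Lemma closed_curve_position k k' u u' : (k < n)%N -> (k' < n)%N ->
  0 <= u <= 1 -> 0 <= u' <= 1 -> k%:R + u < n%:R -> k'%:R + u' < n%:R ->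
  arcs k u = arcs k' u' -> k%:R + u = k'%:R + u'.
Proof.
move=> kn k'n u01 u'01 kun k'un e.
have adjacent j v v' : (j < n)%N -> 0 <= v <= 1 -> 0 <= v' <= 1 ->
    j%:R + v < n%:R -> arcs j v = arcs (next j) v' -> j%:R + v = (next j)%:R + v'.
  move=> jn v01 v'01 jvn e'; have [v1 v'0] := arcs_meet_next jn v01 v'01 e'.
  rewrite v1 v'0 in jvn *.
  case: (next_cases jn) => -[-> jn']; first by rewrite addr0 natr1.
  by move: jvn; rewrite natr1 jn' ltxx.
case: (eqVneq k k') => [kk'|kk'].
  by subst k'; rewrite (arcs_inj kn _ _ e) // in01.
case: (eqVneq k' (next k)) => [k'E|k'k].
  by rewrite k'E in e *; exact: adjacent kn u01 u'01 kun e.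
case: (eqVneq k (next k')) => [kE|kk''].
  by rewrite kE in e *; exact/esym/(adjacent _ _ _ k'n u'01 u01 k'un (esym e)).
exfalso; move: (UI_nonadjacent kn k'n (elimN eqP kk') (elimN eqP k'k) (elimN eqP kk'')).
move/disjoints_subset => /(_ (arcs k u)); apply.
  by apply: (arcs_image kn); exists u => //; exact: in01.
by rewrite e; apply: (arcs_image k'n); exists u' => //; exact: in01.
Qed.

Lemma closed_curve_inj : {in `[0, 1[ &, injective (concat_path n arcs)}.
Proof.
have n0 : (0 < n)%N by lia.
have npos : 0 < n%:R :> R by rewrite ltr0n.
apply: concat_path_inj_on arcs_chained n0 _ _ => [t|k k' u u' kn k'n u01 u'01].
  by rewrite !in_itv /= => /andP[-> /ltW].
rewrite !in_itv /= !ltr_pdivrMr // !mul1r => /andP[_ kun] /andP[_ k'un].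
exact: closed_curve_position.
Qed.

Lemma closed_curve_image : concat_path n arcs @` `[0, 1] `<=` \bigcup_(i in `I_n) U i.
Proof.
have n0 : (0 < n)%N by lia.
move=> y [s]; rewrite /= in_itv /= => s01 <-.
have [k [kn u01 ->]] := concat_path_piece arcs_chained n0 s01.
by exists k => //; apply: (arcs_image kn); exists (n%:R * s - k%:R) => //; exact: in01.
Qed.

End ClosedCurve.

Lemma exists_polygonal_cycle (R : realType) (V : normedModType R) n (U P : nat -> set V)
    (p : nat -> V) :
  (forall i, (i < n)%N -> [/\ open (U i), connected (U i), P i (p i), U i (p i) &
                             U i (p ((i.+1) %% n)%N)]) ->
  exists d w, polygonal_cycle n U P d w.
Proof.
move=> H.
have paths i : exists dw : nat * (nat -> V), (i < n)%N ->
    [/\ dw.2 0%N = p i, dw.2 dw.1 = p ((i.+1) %% n)%N & polygonal (U i) dw.1 dw.2].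
  have [ilt|_] := ltnP i n; last by exists (0%N, fun=> p i).
  have [oU cU _ Up Up'] := H i ilt.
  by have [d [w [w0 wd Pw]]] := connected_polygonal_path oU cU Up Up'; exists (d, w).
have [dw Hdw] := choice paths.
exists (fun i => (dw i).1), (fun i => (dw i).2) => i ilt.
have [w0 wd Pw] := Hdw i ilt; have [_ _ Pi _ _] := H i ilt.
have [w0' _ _] := Hdw _ (next_lt ilt).
by rewrite w0 wd w0'.
Qed.

(* It is convertible, but not
   syntactically equal, to [plane] (and so are the two structures on the reals
   involved), which is why some steps below are closed by [exact] up to
   conversion. *)
Local Notation normed_plane := (Rdefinitions.R^o * Rdefinitions.R^o)%type.

Lemma regular_closed_closed (A : set plane) : regular_closed A -> closed A.
Proof. by move=> <-; exact: closed_closure. Qed.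

Lemma regular_closed_interior_neq0 (A : set plane) :
  regular_closed A -> A !=set0 -> A° !=set0.
Proof.
move=> rcA [x Ax]; apply: contrapT => nint.
have int0 : A° = set0 by apply/seteqP; split => // y Iy; apply: nint; exists y.
by move: Ax; rewrite -rcA int0 closure0.
Qed.

Lemma rc_prod_eq0_interiorI (A B : set plane) : rc_prod A B = set0 -> A° `&` B° = set0.
Proof.
move=> AB0; apply/disjoints_subset => x Ax Bx.
have : rc_prod A B x by apply: subset_closure; rewrite interiorI.
by rewrite AB0.
Qed.

Lemma rc_prod_eq0_interiors n (a : nat -> set plane) :
  (forall i j, (i < j)%N -> (j < n)%N -> rc_prod (a i) (a j) = set0) ->
  forall i j, (i < n)%N -> (j < n)%N -> i <> j -> (a i)° `&` (a j)° = set0.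
Proof.
move=> prod0 i j ilt jlt; case: (ltngtP i j) => // ij _.
  exact/rc_prod_eq0_interiorI/prod0.
by rewrite setIC; exact/rc_prod_eq0_interiorI/prod0.
Qed.

Lemma exists_interior_points n (a : nat -> set plane) :
  (forall i, (i < n)%N -> regular_closed (a i)) -> (forall i, (i < n)%N -> a i !=set0) ->
  exists p : nat -> plane, forall i, (i < n)%N -> (a i)° (p i).
Proof.
move=> rc ne; have pts i : exists q : plane, (i < n)%N -> (a i)° q.
  have [ilt|_] := ltnP i n; last by exists (0, 0).
  by have [q] := regular_closed_interior_neq0 (rc i ilt) (ne i ilt); exists q.
by have [p Pp] := choice pts; exists p.
Qed.

Lemma jordan_arc_polyline d (w : nat -> normed_plane) : (0 < d)%N ->
  simple_polygonal d w -> jordan_arc (polyline d w).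
Proof.
move=> d0 Sw; split.
  by apply: continuous_subspaceT => t; exact: (@continuous_polyline _ _ d w t).
by left => s t; exact: (polyline_inj d0 Sw).
Qed.

Lemma concat_path_jordan_curve N (F : nat -> Rdefinitions.R -> normed_plane) :
  (0 < N)%N -> chained N F -> F N.-1 1 = F 0%N 0 -> (forall j, continuous (F j)) ->
  {in `[0, 1[ &, injective (concat_path N F)} ->
  concat_jordan_curve N F (concat_path N F @` `[0, 1]).
Proof.
move=> N0 ch closing cF inj; split.
  move=> i iN; case: (next_cases iN) => -[-> h]; first exact: ch.
  by rewrite -closing -h.
exists (concat_path N F), (fun j => j%:R / N%:R); split => //.
- split; last by rewrite concat_path0 concat_path1.
  by apply: continuous_subspaceT => t; exact: (@continuous_concat_path _ _ N F cF t).
- by rewrite mul0r.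
- by rewrite divff // pnatr_eq0 -lt0n.
- move=> i iN; have [g0 g1] := concat_path_node ch iN.
  split => //; last by have := concat_path_image ch iN; exact.
  by rewrite ler_pM2r ?invr_gt0 ?ltr0n // ler_nat.
Qed.

Lemma arcs_concat_jordan_curve n (U P : nat -> set normed_plane) d w :
  (3 <= n)%N -> (forall i, (i < n)%N -> P i `&` P ((i.+1) %% n)%N = set0) ->
  (forall i j, (i < n)%N -> (j < n)%N -> i <> j -> j <> ((i.+1) %% n)%N ->
     i <> ((j.+1) %% n)%N -> U i `&` U j = set0) ->
  polygonal_cycle n U P d w -> simple_cycle n d w ->
  concat_jordan_curve n (arcs d w) (concat_path n (arcs d w) @` `[0, 1]).
Proof.
move=> n3 PI_next UI_far C S; apply: concat_path_jordan_curve.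
- lia.
- exact (arcs_chained n3 PI_next C).
- have nn : (n.-1 < n)%N by rewrite ltn_predL; lia.
  have e : (n.-1.+1 %% n)%N = 0%N by rewrite prednK ?modnn //; lia.
  by have := arcs1 PI_next C nn; rewrite e => ->; exact (esym (arcs0 d w 0)).
- by move=> j; exact (@continuous_polyline _ _ (d j) (w j)).
- exact (closed_curve_inj n3 PI_next UI_far C S).
Qed.

Theorem lemma5p2 (n : nat) (a : nat -> set plane) :
  (3 <= n)%N ->
  (forall i, (i < n)%N -> regular_closed (a i)) ->
  (forall i, (i < n)%N -> a i !=set0) ->
  (forall i, (i < n)%N -> connected (interior (a i `|` a ((i.+1) %% n)%N))) ->
  (forall i j, (i < j)%N -> (j < n)%N -> rc_prod (a i) (a j) = set0) ->
  exists (alpha : nat -> Rdefinitions.R -> plane) (p : nat -> plane),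
    [/\ forall i, (i < n)%N ->
          [/\ jordan_arc (alpha i), alpha i 0 = p i,
              alpha i 1 = p ((i.+1) %% n)%N &
              arc_img (alpha i) `<=` interior (a i `|` a ((i.+1) %% n)%N)],
        exists C : set plane, concat_jordan_curve n alpha C /\
          C `<=` interior (\bigcup_(i in `I_n) a i) &
        forall i, (i < n)%N -> interior (a i) (p i)].
Proof.
move=> n3 rc ne conn prod0.
have closed_a i (ilt : (i < n)%N) : closed (a i) := regular_closed_closed (rc i ilt).
have disj := rc_prod_eq0_interiors prod0.
pose U i : set normed_plane := (a i `|` a ((i.+1) %% n)%N)°.
pose P i : set normed_plane := (a i)°.
have PI_next i (ilt : (i < n)%N) : P i `&` P ((i.+1) %% n)%N = set0 :=
  disj _ _ ilt (next_lt ilt) (nesym (next_neq (ltnW n3) ilt)).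
have [p Pp] := exists_interior_points rc ne.
have [d0 [w0 C0]] : exists d (w : nat -> nat -> normed_plane), polygonal_cycle n U P d w.
  apply: (exists_polygonal_cycle (p := p : nat -> normed_plane)) => i ilt.
  split; [exact: open_interior|exact: conn|exact: Pp| |].
    by apply: interiorS (Pp i ilt) => ?; left.
  by apply: interiorS (Pp _ (next_lt ilt)) => ?; right.
have [d [w [C S]]] :=
  exists_simple_cycle (U := U) (P := P) n3 (corridorI_next n3 closed_a disj) PI_next C0.
exists (arcs d w), (fun i => w i 0%N); split => [i ilt||i ilt]; last by case: (C _ ilt).
  split; [|exact (arcs0 d w i)|exact (arcs1 PI_next C ilt)|exact (arcs_image PI_next C ilt)].
  by apply: jordan_arc_polyline; [exact (cycle_len_gt0 PI_next C ilt)|case: (S _ ilt)].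
exists (concat_path n (arcs d w) @` `[0, 1]); split.
  exact: (arcs_concat_jordan_curve (U := U) n3 PI_next (corridorI_nonadjacent closed_a disj) C S).
move=> y /(closed_curve_image n3 PI_next C) [i ilt]; apply: interiorS => z [] az.
  by exists i.
by exists ((i.+1) %% n)%N => //; exact: next_lt.
Qed.
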